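(* Let $G$ be a finite non-identity permutation group acting on a finite set $V$, let $\delta$ be the minimum degree of $G$, and suppose the distinguishing number of $G$ is at least $3$. Then $|G| \ge 1 + 2^{\delta/2}$.
   Context: For a permutation group $G$ acting on a set $V$, a partition $\pi$ of $V$ is distinguishing if the only element of $G$ fixing each cell of $\pi$ (setwise) is the identity. The distinguishing number of $G$ is the minimum number of cells in a distinguishing partition. The minimum degree of $G$ is the minimum, over non-identity elements $g\in G$, of the number of points of $V$ moved by $g$. *)

From mathcomp Require Import all_boot all_order all_algebra all_fingroup all_field.
Set Implicit Arguments. Unset Strict Implicit. Unset Printing Implicit Defensive.
Import Order.TTheory GRing.Theory Num.Theory.

Definition moved (T : finType) (g : {perm T}) : {set T} := [set x | g x != x].

(* Minimum degree: minimum over non-identity g in G of #|moved g|.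
   Supports have size <= #|T|, so #|T| as the neutral element of minn is
   harmless whenever G is non-identity. *)
Definition min_degree (T : finType) (G : {group {perm T}}) : nat :=
  \big[minn/#|T|]_(g in G | g != 1%g) #|moved g|.

Definition distinguishing (T : finType) (G : {group {perm T}}) (P : {set {set T}}) : bool :=
  [forall g in G, [forall B in P, g @: B == B] ==> (g == 1%g)].

(* Every partition of V has at most #|T| cells and the partition into
   singletons (with exactly #|T| cells) is always distinguishing, so #|T| as the
   neutral element of minn gives exactly the minimum. *)
Definition dist_number (T : finType) (G : {group {perm T}}) : nat :=
  \big[minn/#|T|]_(P : {set {set T}} | partition P [set: T] && distinguishing G P) #|P|.

From mathcomp Require Import all_boot all_order all_algebra all_fingroup all_field.
Import Order.TTheory GRing.Theory Num.Theory.
Set Implicit Arguments. Unset Strict Implicit. Unset Printing Implicit Defensive.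

(* Let H be the set of non-identity elements of G, n = #|V|, delta the
   minimum degree and c(g) the number of cycles of g on V.
   - If the distinguishing number is at least 3, then no partition {B, V\B}
     is distinguishing, so every subset B of V is fixed setwise by some
     g in H.  Hence 2^n <= sum_(g in H) #{B | g B = B}.
   - A set fixed by g is a union of cycles of g, so g fixes at most 2^c(g)
     sets; with C the maximum of c over H this gives 2^n <= |H| * 2^C.
   - A moved point lies in a cycle of length >= 2, so 2 c(g) + #moved(g)
     <= 2n, whence 2 C + delta <= 2n for a maximising g.
   Squaring the second bound and combining with the third gives
   2^delta <= |H|^2, i.e. |G| = 1 + |H| >= 1 + 2^(delta/2). *)

Section PermutationCycles.
Variable T : finType.
Implicit Types (g : {perm T}) (B : {set T}) (x : T).

Lemma porbit_sub_fixed g B x : g @: B = B -> x \in B -> porbit g x \subset B.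
Proof.
move=> gB xB; apply/subsetP => _ /porbitP [i ->].
elim: i => [|i IHi]; first by rewrite expg0 perm1.
by rewrite expgSr permM -gB imset_f.
Qed.

(* g fixes at most 2^(number of cycles of g) sets: a fixed set is the union
   of the cycles it contains, so it is determined by a set of cycles. *)
Lemma card_fixed_sets g :
  #|[set B : {set T} | g @: B == B]| <= 2 ^ #|porbits g|.
Proof.
set F := [set B : {set T} | _].
pose cycles_in B := [set C in porbits g | C \subset B].
have cover_cycles : {in F, forall B, cover (cycles_in B) = B}.
  move=> B; rewrite inE => /eqP gB; apply/setP => x; apply/bigcupP/idP.
    by case=> C; rewrite inE => /andP[_ /subsetP CB] /CB.
  move=> xB; exists (porbit g x); last exact: porbit_id.
  by rewrite inE imset_f //= porbit_sub_fixed.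
have inj_cycles : {in F &, injective cycles_in}.
  by move=> B1 B2 /cover_cycles {2}<- /cover_cycles {2}<- ->.
rewrite -(card_in_imset inj_cycles) -card_powerset; apply: subset_leq_card.
apply/subsetP => _ /imsetP[B _ ->]; rewrite inE; apply/subsetP => C.
by rewrite inE => /andP[].
Qed.

Definition weight g x : nat := 2 - (x \in moved g).

(* Every cycle has total weight at least 2: it is either a fixed point, or
   contains the two distinct moved points x and g x. *)
Lemma porbit_weight g x :
  2 <= \sum_(y | porbit g y == porbit g x) weight g y.
Proof.
rewrite (bigD1 x) //=; case: (boolP (x \in moved g)) => xM; last first.
  by rewrite /weight (negbTE xM) leq_addr.
have gxx : g x != x by rewrite inE in xM.
have gx_orb : porbit g (g x) == porbit g x.
  by rewrite -[in g x](expg1 g) porbit_perm.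
rewrite (bigD1 (g x)) /=; last by rewrite gx_orb gxx.
have gxM : g x \in moved g by rewrite inE (inj_eq perm_inj).
by rewrite /weight xM gxM addnA leq_addr.
Qed.

(* Summing the weights cycle by cycle: 2 c(g) + #moved(g) <= 2 #|T|. *)
Lemma porbits_moved g : 2 * #|porbits g| + #|moved g| <= 2 * #|T|.
Proof.
have sum_weight : \sum_x weight g x + #|moved g| = 2 * #|T|.
  rewrite -sum1_card (big_mkcond (mem (moved g))) -big_split /=.
  rewrite mulnC -sum_nat_const; apply: eq_bigr => x _.
  by rewrite /weight; case: (x \in moved g).
rewrite -sum_weight leq_add2r (partition_big_imset (porbit g)) /=.
rewrite mulnC -sum_nat_const; apply: leq_sum => _ /imsetP[x _ ->].
exact: porbit_weight.
Qed.

Definition bipartition B : {set {set T}} := [set B; ~: B] :\ set0.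

Lemma bipartitionP B : partition (bipartition B) [set: T].
Proof.
apply/and3P; split.
- apply/eqP/setP => x; rewrite inE; apply/bigcupP.
  have [xB | xNB] := boolP (x \in B).
    by exists B => //; rewrite !inE eqxx ?andbT; apply/set0Pn; exists x.
  exists (~: B); last by rewrite inE.
  by rewrite !inE eqxx orbT andbT; apply/set0Pn; exists x; rewrite inE.
- apply/trivIsetP => X Y; rewrite !inE.
  move=> /andP[_ /orP[]/eqP->] /andP[_ /orP[]/eqP->]; rewrite ?eqxx // => _.
    by rewrite -setI_eq0 setICr.
  by rewrite -setI_eq0 setIC setICr.
- by rewrite !inE eqxx.
Qed.

Lemma card_bipartition B : #|bipartition B| <= 2.
Proof.
apply: leq_trans (subset_leq_card (subsetDl _ _)) _.
by rewrite cards2; case: (_ != _).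
Qed.

End PermutationCycles.

Section DistinguishingNumber.
Variables (T : finType) (G : {group {perm T}}).

Lemma min_degree_le g : g \in G -> g != 1%g -> min_degree G <= #|moved g|.
Proof.
move=> gG g1; rewrite /min_degree -minEnat.
by apply: (bigmin_le_cond _ (fun g => #|moved g|)); rewrite gG g1.
Qed.

Lemma dist_number_le P :
  partition P [set: T] -> distinguishing G P -> dist_number G <= #|P|.
Proof.
move=> partP distP; rewrite /dist_number -minEnat.
have := bigmin_le_cond #|T| (fun Q : {set {set T}} => #|Q|)
  (P := fun Q => partition Q [set: T] && distinguishing G Q).
by apply; rewrite partP distP.
Qed.

(* If no partition into at most two cells is distinguishing, then every set
   is fixed setwise by some non-identity element of G. *)
Lemma fixed_by_nontrivial (B : {set T}) :
  3 <= dist_number G -> exists2 g, g \in G :\ 1%g & g @: B == B.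
Proof.
move=> dist3; apply/exists_inP; apply: contraLR dist3 => noFix.
rewrite -leqNgt; apply: leq_trans (card_bipartition B).
apply: dist_number_le; first exact: bipartitionP.
apply/forall_inP => g gG; apply/implyP => /forall_inP fixP.
have gB : g @: B == B.
  have [-> | B0] := eqVneq B set0; first by rewrite imset0.
  by apply: fixP; rewrite !inE B0 eqxx.
apply: contraR noFix => g1; apply/exists_inP; exists g => //.
by rewrite !inE g1.
Qed.

(* Counting pairs (g, B) with g in G :\ 1 fixing B, bounded via the maximal
   number of cycles of a non-identity element. *)
Lemma card_subsets_le (C : nat) :
  3 <= dist_number G -> (forall g, g \in G :\ 1%g -> #|porbits g| <= C) ->
  2 ^ #|T| <= #|G :\ 1%g| * 2 ^ C.
Proof.
move=> dist3 cycC; rewrite -cardsT -card_powerset -sum1_card.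
apply: (@leq_trans (\sum_(B in powerset [set: T])
                      \sum_(g in G :\ 1%g) (g @: B == B : nat))).
  apply: leq_sum => B _; have [g gH gB] := fixed_by_nontrivial B dist3.
  by rewrite (bigD1 g) //= gB.
rewrite exchange_big /= -sum_nat_const; apply: leq_sum => g gH.
apply: leq_trans (leq_trans (card_fixed_sets g) _); last first.
  by rewrite leq_pexp2l ?cycC.
rewrite -sum1_card big_mkcond [X in _ <= X]big_mkcond /=.
by apply: leq_sum => B _; rewrite !inE subsetT; case: (_ == _).
Qed.

Lemma min_degree_bound :
  G != 1%G -> 3 <= dist_number G -> 2 ^ min_degree G <= #|G :\ 1%g| ^ 2.
Proof.
move=> Gn1 dist3; set H := G :\ 1%g.
pose c (g : {perm T}) := #|porbits g|.
have H0 : 0 < #|H|.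
  have : G :!=: 1%g by apply: contra Gn1 => /eqP G1; apply/eqP/val_inj.
  case/trivgPn => g gG g1; rewrite card_gt0; apply/set0Pn; exists g.
  by rewrite !inE g1 gG.
have [g0 g0H maxc] := eq_bigmax_cond c H0.
have cmax g : g \in H -> c g <= c g0 by rewrite -maxc; apply: leq_bigmax_cond.
have count := card_subsets_le dist3 cmax.
have degree_cycles : min_degree G + c g0 * 2 <= #|T| * 2.
  have [g0n1 g0G] := setD1P g0H.
  rewrite addnC ![_ * 2]mulnC; apply: leq_trans (porbits_moved g0).
  by rewrite leq_add2l min_degree_le.
have : 2 ^ min_degree G * 2 ^ (c g0 * 2) <= #|H| ^ 2 * 2 ^ (c g0 * 2).
  apply: (@leq_trans (2 ^ (#|T| * 2))); first by rewrite -expnD leq_pexp2l.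
  by rewrite !expnM -expnMn leq_exp2r.
by rewrite leq_pmul2r ?expn_gt0.
Qed.

End DistinguishingNumber.

Lemma sqrt2_exp_le (a b : nat) :
  2 ^ a <= b ^ 2 -> (sqrtC 2 ^+ a <= b%:R :> algC)%R.
Proof.
move=> ab; have sqrt2_ge0 : (0 <= sqrtC 2 :> algC)%R by rewrite sqrtC_ge0 ler0n.
rewrite -(ler_pXn2r (n := 2)) // ?nnegrE ?exprn_ge0 ?ler0n //.
by rewrite -exprM mulnC exprM sqrtCK -!natrX ler_nat.
Qed.

Theorem lemma1 (T : finType) (G : {group {perm T}}) :
  G != 1%G -> 3 <= dist_number G ->
  ((1 + sqrtC 2 ^+ min_degree G : algC) <= (#|G|%:R : algC))%R.
Proof.
move=> Gn1 dist3; rewrite (cardsD1 1%g) group1 natrD lerD2l.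
exact/sqrt2_exp_le/min_degree_bound.
Qed.
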